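(* For every $c>1$, \[\Delta\theta_{MN}(c):=\int_{\sin^{-1}(1/c)}^{\pi-\sin^{-1}(1/c)}\frac{d\psi}{1-[R^-(c\sin\psi)]^2}<\pi.\]
   Context: Let $K(R)=\frac{\exp(\frac{R^2-1}{2})}{R}$ for $R>0$ (strictly decreasing on $(0,1]$ with $K(1)=1$). For $s\ge1$ let $R^-(s)\in(0,1]$ be the solution of $K(R)=s$ in $(0,1]$. The integral is the change of polar angle along the shrinking curve with energy $c$ (satisfying $K(R)=c\sin\psi$) between its two points with $R=1$, traversed through the part where $R<1$. *)

From Stdlib Require Import Reals Lra ClassicalEpsilon.
From Coquelicot Require Import Coquelicot.
Open Scope R_scope.

Definition K (r : R) : R := exp ((r ^ 2 - 1) / 2) / r.

Definition Rminus_sol (s : R) : R :=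
  epsilon (inhabits 0) (fun r => 0 < r <= 1 /\ K r = s).

Definition dthetaMN_integrand (c : R) (psi : R) : R :=
  / (1 - (Rminus_sol (c * sin psi)) ^ 2).

(* Put y = 1 - R^2 with R = R^-(c sin psi).  The relation K(R) = c sin psi reads
   (1 - y) e^y = p with p = 1/(c sin psi)^2, and a Taylor estimate of e^y, checked on a
   grid of subintervals of [0,1], gives 1/y <= 1 + (18/25) p^3/sqrt(1 - p) + (21/50) p.
   In the variable t = cot psi this majorant has an explicit primitive H, and
   |H(psi) - psi| <= D(c) on the whole interval of integration.  So the integral over any
   compact [a,b] inside it is at most (b - a) + 2 D(c); as the integrand is positive, the
   improper integral exists and is at most pi - 2 asin(1/c) + 2 D(c).  Finally
   D(c) < asin(1/c), again a one-variable polynomial inequality after x = 1/c. *)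

From Stdlib Require Import Reals Lra Psatz Sorted List ClassicalEpsilon.
From Coquelicot Require Import Coquelicot.
Import ListNotations.
Open Scope R_scope.

Lemma locally_sorted_cover (P : R -> Prop) (S : R -> R -> Prop) :
  (forall a b y, S a b -> a <= y <= b -> P y) ->
  forall a b l, LocallySorted S (a :: b :: l) ->
  forall y, a <= y <= last (b :: l) 0 -> P y.
Proof.
  intros HS a b l; revert a b; induction l as [|b' l IH]; intros a b Hl y Hy;
    inversion Hl as [| |? ? ? Htl Hab]; subst.
  - exact (HS a b y Hab Hy).
  - destruct (Rle_or_lt y b).
    + exact (HS a b y Hab ltac:(lra)).
    + apply (IH b b' Htl). split; [lra | exact (proj2 Hy)].
Qed.

Lemma Rinv_between_0_1 x : 1 < x -> 0 < / x < 1.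
Proof.
  intros Hx. split; [apply Rinv_0_lt_compat; lra|].
  rewrite <- Rinv_1. apply Rinv_lt_contravar; lra.
Qed.

Lemma sqrt_le_am_gm q k : 0 <= q -> 0 < k -> sqrt q <= (q + k^2) / (2 * k).
Proof.
  intros Hq Hk. pose proof (sqrt_sqrt q Hq) as Hsq.
  assert (0 <= (sqrt q - k)^2) by apply pow2_ge_0.
  apply Rmult_le_reg_r with (2 * k); [lra|].
  replace ((q + k^2) / (2 * k) * (2 * k)) with (q + k^2) by (field; lra).
  nra.
Qed.

Lemma is_derive_asin x : -1 < x < 1 -> is_derive asin x (/ sqrt (1 - x^2)).
Proof.
  intros Hx. apply is_derive_Reals.
  pose proof (derive_pt_asin x Hx) as E. unfold derive_pt in E.
  destruct (derivable_pt_asin x Hx) as [l Hl]. simpl in E. subst l.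
  replace (1 - x^2) with (1 - x²) by (unfold Rsqr; ring).
  unfold Rdiv in Hl. rewrite Rmult_1_l in Hl. exact Hl.
Qed.

Lemma asin_nonneg x : 0 <= x <= 1 -> 0 <= asin x.
Proof.
  intros Hx. destruct (Rle_or_lt 0 (asin x)) as [|Hneg]; [assumption|].
  pose proof (asin_bound x). pose proof (sin_asin x ltac:(lra)).
  assert (sin (asin x) < 0) by (apply sin_lt_0_var; pose proof PI2_3_2; lra).
  lra.
Qed.

Lemma PI_le_16_5 : PI <= 16/5.
Proof.
  pose proof (PI_2_3_7_ineq 1) as [_ H].
  unfold tg_alt, PI_2_3_7_tg, Ratan_seq in H. simpl in H. lra.
Qed.

Lemma asin_ge_taylor5 x : 0 <= x <= 1 -> x + x^3/6 + 3 * x^5/40 <= asin x.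
Proof.
  intros Hx. pose proof (asin_nonneg x Hx) as Hth.
  pose proof (sin_asin x ltac:(lra)) as Hs.
  set (th := asin x) in *.
  set (F := fun t => t - sin t - sin t ^ 3/6 - 3 * sin t ^ 5/40).
  set (dF := fun t => 1 - cos t * (1 + sin t ^ 2/2 + 3 * sin t ^ 4/8)).
  assert (HdF : forall t, 0 <= dF t).
  { intros t. unfold dF. pose proof (sin2_cos2 t) as H. unfold Rsqr in H.
    pose proof (COS_bound t).
    replace (sin t ^ 4) with ((sin t * sin t)^2) by ring.
    replace (sin t ^ 2) with (sin t * sin t) by ring.
    replace (sin t * sin t) with (1 - cos t * cos t) by lra.
    replace (1 - cos t * (1 + (1 - cos t * cos t)/2 + 3 * (1 - cos t * cos t)^2/8))
      with ((1 - cos t)^3 * (3 * cos t ^ 2/8 + 9 * cos t/8 + 1)) by field.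
    apply Rmult_le_pos; [apply pow_le|]; nra. }
  destruct (MVT_gen F 0 th dF) as [xi [_ HF]].
  - intros t _. unfold F, dF. auto_derive; [auto | field].
  - intros t _. apply continuity_pt_filterlim.
    apply (ex_derive_continuous (K := R_AbsRing) (V := R_NormedModule)).
    unfold F. auto_derive. auto.
  - unfold F in HF. rewrite sin_0, Hs in HF.
    assert (0 <= dF xi * (th - 0)) by (apply Rmult_le_pos; [apply HdF | lra]).
    simpl in HF. lra.
Qed.

Lemma RInt_le_RInt_superinterval (f : R -> R) a a0 b0 b :
  a <= a0 -> a0 <= b0 -> b0 <= b -> ex_RInt f a b ->
  (forall x, a < x < b -> 0 <= f x) -> RInt f a0 b0 <= RInt f a b.
Proof.
  intros Ha Hab Hb Hf Hpos.
  assert (Ha_b0 := ex_RInt_Chasles_1 (V := R_CompleteNormedModule) f a b0 b ltac:(lra) Hf).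
  assert (Hb0_b := ex_RInt_Chasles_2 (V := R_CompleteNormedModule) f a b0 b ltac:(lra) Hf).
  assert (Ha_a0 := ex_RInt_Chasles_1 (V := R_CompleteNormedModule) f a a0 b0 ltac:(lra) Ha_b0).
  assert (Ha0_b0 := ex_RInt_Chasles_2 (V := R_CompleteNormedModule) f a a0 b0 ltac:(lra) Ha_b0).
  rewrite <- (RInt_Chasles f a b0 b), <- (RInt_Chasles f a a0 b0) by assumption.
  assert (0 <= RInt f a a0) by (apply RInt_ge_0; [lra | assumption | intros; apply Hpos; lra]).
  assert (0 <= RInt f b0 b) by (apply RInt_ge_0; [lra | assumption | intros; apply Hpos; lra]).
  unfold plus; simpl. lra.
Qed.

Lemma is_RInt_gen_nonneg_bounded (f : R -> R) (al be M : R) :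
  al < be ->
  (forall a b, al < a -> a <= b -> b < be -> ex_RInt f a b) ->
  (forall x, al < x < be -> 0 <= f x) ->
  (forall a b, al < a -> a <= b -> b < be -> RInt f a b <= M) ->
  exists v, is_RInt_gen f (at_right al) (at_left be) v /\ v <= M.
Proof.
  intros Hab Hex Hpos Hbd.
  set (E := fun y => exists a b, al < a /\ a <= b /\ b < be /\ y = RInt f a b).
  destruct (completeness E) as [v [Hub Hlub]].
  { exists M. intros y (a & b & ? & ? & ? & ->). auto. }
  { exists (RInt f ((al + be)/2) ((al + be)/2)), ((al + be)/2), ((al + be)/2). repeat split; lra. }
  exists v. split; [| apply Hlub; intros y (a & b & ? & ? & ? & ->); auto].
  apply filterlimi_locally. intros eps.
  assert (Happrox : exists a0 b0, al < a0 <= b0 /\ b0 < be /\ v - eps < RInt f a0 b0).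
  { apply NNPP. intros Hno.
    assert (v <= v - eps); [| pose proof (cond_pos eps); lra].
    apply Hlub. intros y (a & b & ? & ? & ? & ->).
    apply Rnot_lt_le. intros Hlt. apply Hno. exists a, b. repeat split; assumption. }
  destruct Happrox as (a0 & b0 & Ha0 & Hb0 & Hclose).
  apply (Filter_prod _ _ _ (fun a => al < a <= a0) (fun b => b0 <= b < be)).
  - exists (mkposreal _ (proj2 (Rlt_0_minus _ _) (proj1 Ha0))). intros x Hx Hal.
    destruct (Rabs_def2 (x - al) (a0 - al) Hx). lra.
  - exists (mkposreal _ (proj2 (Rlt_0_minus _ _) Hb0)). intros x Hx Hbe.
    destruct (Rabs_def2 (x - be) (be - b0) Hx). lra.
  - intros a b Ha Hb. exists (RInt f a b). split.
    + apply (RInt_correct (V := R_CompleteNormedModule)), Hex; lra.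
    + assert (RInt f a b <= v) by (apply Hub; exists a, b; repeat split; lra).
      assert (RInt f a0 b0 <= RInt f a b).
      { apply RInt_le_RInt_superinterval; try lra; [apply Hex; lra | intros; apply Hpos; lra]. }
      change (Rabs (RInt f a b - v) < eps). apply Rabs_def1; lra.
Qed.

Definition exp_taylor3 (y : R) : R := 1 + y + y^2/2 + y^3/6.
Definition exp_taylor3_defect (y : R) : R := /2 + y/3 + y^2/6.

Lemma exp_taylor3_le_exp y : 0 <= y -> exp_taylor3 y <= exp y.
Proof.
  intros Hy. pose proof (exp_ge_taylor y 3 Hy) as H.
  unfold exp_taylor3. simpl in H. unfold Factorial.fact in H. simpl in H. lra.
Qed.

Lemma one_sub_exp_taylor3 y :
  1 - (1 - y) * exp_taylor3 y = y^2 * exp_taylor3_defect y.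
Proof. unfold exp_taylor3, exp_taylor3_defect. field. Qed.

Lemma exp_taylor3_ge1 y : 0 <= y -> 1 <= exp_taylor3 y.
Proof. intros. unfold exp_taylor3. nra. Qed.

Lemma exp_taylor3_le a y : 0 <= a <= y -> exp_taylor3 a <= exp_taylor3 y.
Proof.
  intros Hay. unfold exp_taylor3.
  assert (0 <= (y - a) * (1 + (y + a)/2 + (y*y + y*a + a*a)/6)) by (apply Rmult_le_pos; nra).
  nra.
Qed.

Lemma exp_taylor3_defect_le a y : 0 <= a <= y -> exp_taylor3_defect a <= exp_taylor3_defect y.
Proof. intros. unfold exp_taylor3_defect. nra. Qed.

Lemma exp_taylor3_defect_pos y : 0 <= y -> 0 < exp_taylor3_defect y.
Proof. intros. unfold exp_taylor3_defect. nra. Qed.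

Definition majorant_poly_ineq (y : R) : Prop :=
  exp_taylor3_defect y + 9/16 <=
  27/25 * (1 - y)^2 * exp_taylor3 y ^ 3
  + 21/50 * y * exp_taylor3 y * (exp_taylor3_defect y + 9/16).

Definition majorant_poly_ineq_on (a b : R) : Prop :=
  0 <= a /\ a <= b /\ b <= 1 /\
  exp_taylor3_defect b + 9/16 <=
  27/25 * (1 - b)^2 * exp_taylor3 a ^ 3
  + 21/50 * a * exp_taylor3 a * (exp_taylor3_defect a + 9/16).

Lemma majorant_poly_ineq_on_interval a b y :
  majorant_poly_ineq_on a b -> a <= y <= b -> majorant_poly_ineq y.
Proof.
  intros (Ha & _ & Hb & H) Hy. unfold majorant_poly_ineq.
  pose proof (exp_taylor3_ge1 a Ha).
  pose proof (exp_taylor3_le a y ltac:(lra)).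
  pose proof (exp_taylor3_defect_le a y ltac:(lra)).
  pose proof (exp_taylor3_defect_le y b ltac:(lra)).
  pose proof (exp_taylor3_defect_pos a Ha).
  assert ((1 - b)^2 * exp_taylor3 a ^ 3 <= (1 - y)^2 * exp_taylor3 y ^ 3).
  { apply Rmult_le_compat; try apply pow_le; try lra; [nra | apply pow_incr; lra]. }
  assert (a * exp_taylor3 a * (exp_taylor3_defect a + 9/16)
          <= y * exp_taylor3 y * (exp_taylor3_defect y + 9/16)).
  { apply Rmult_le_compat; try lra; [nra | apply Rmult_le_compat; lra]. }
  lra.
Qed.

Lemma majorant_poly y : 0 <= y <= 1 -> majorant_poly_ineq y.
Proof.
  intros Hy.
  apply (locally_sorted_cover _ _ majorant_poly_ineq_on_interval 0 (1/256)
    [1/128; 1/64; 3/128; 1/32; 3/64; 1/16; 3/32; 1/8; 5/32; 3/16; 1/4; 5/16;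
     3/8; 7/16; 1/2; 9/16; 5/8; 21/32; 11/16; 23/32; 3/4; 49/64; 25/32; 51/64;
     13/16; 53/64; 107/128; 27/32; 109/128; 55/64; 111/128; 7/8; 113/128;
     57/64; 115/128; 29/32; 117/128; 59/64; 119/128; 15/16; 61/64; 31/32; 1]);
    [|simpl; lra].
  unfold majorant_poly_ineq_on, exp_taylor3, exp_taylor3_defect.
  repeat (apply LSorted_consn; [| repeat split; lra]); apply LSorted_cons1.
Qed.

(* The constants 18/25 and 21/50 are tuned so that both [majorant_poly] and
   [asin_bound_gap_sqr_gt] hold. *)
Definition majorant (p : R) : R := 1 + 18/25 * p^3 / sqrt (1 - p) + 21/50 * p.

Lemma majorant_le p q : 0 <= p <= q -> q < 1 -> majorant p <= majorant q.
Proof.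
  intros Hpq Hq. unfold majorant.
  assert (Hs : 0 < sqrt (1 - q)) by (apply sqrt_lt_R0; lra).
  assert (sqrt (1 - q) <= sqrt (1 - p)) by (apply sqrt_le_1; lra).
  assert (p^3 <= q^3) by (apply pow_incr; lra).
  assert (p^3 / sqrt (1 - p) <= q^3 / sqrt (1 - q)).
  { apply Rmult_le_compat; [apply pow_le; lra | left; apply Rinv_0_lt_compat; lra | lra |].
    apply Rinv_le_contravar; lra. }
  lra.
Qed.

Lemma one_sub_mul_exp_lt_1 y : 0 < y -> (1 - y) * exp y < 1.
Proof.
  intros Hy. pose proof (exp_ineq1 (- y) ltac:(lra)).
  assert (E : exp (- y) * exp y = 1) by (rewrite <- exp_plus, Rplus_opp_l; apply exp_0).
  pose proof (exp_pos y). nra.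
Qed.

Lemma inv_le_majorant y : 0 < y < 1 -> / y <= majorant ((1 - y) * exp y).
Proof.
  intros Hy.
  pose proof (exp_taylor3_le_exp y ltac:(lra)) as HTe.
  pose proof (exp_taylor3_ge1 y ltac:(lra)) as HT1.
  pose proof (exp_taylor3_defect_pos y ltac:(lra)) as HQ.
  pose proof (majorant_poly y ltac:(lra)) as Hpoly; unfold majorant_poly_ineq in Hpoly.
  pose proof (one_sub_exp_taylor3 y) as HPQ.
  set (T := exp_taylor3 y) in *. set (Q := exp_taylor3_defect y) in *.
  set (P := (1 - y) * T) in *.
  assert (HP : 0 < P <= (1 - y) * exp y) by (unfold P; split; nra).
  pose proof (one_sub_mul_exp_lt_1 y ltac:(lra)).
  (* With [P = (1 - y) T3(y) <= p], [1 - P = y^2 Q(y)] and [sqrt Q <= (Q + 9/16)/(3/2)],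
     the claim for [P] becomes [majorant_poly] multiplied by [1 - y]. *)
  apply Rle_trans with (majorant P); [| apply majorant_le; lra].
  assert (HsP : sqrt (1 - P) = y * sqrt Q).
  { rewrite HPQ, sqrt_mult, sqrt_pow2; nra. }
  assert (HsQ : sqrt Q <= (Q + 9/16) / (3/2)).
  { replace (3/2) with (2 * (3/4)) by field. replace (9/16) with ((3/4)^2) by field.
    apply sqrt_le_am_gm; lra. }
  assert (Hs0 : 0 < sqrt (1 - P)) by (apply sqrt_lt_R0; nra).
  assert (HD : 0 < y * (Q + 9/16)) by nra.
  assert (HsD : sqrt (1 - P) <= y * (Q + 9/16) / (3/2)).
  { rewrite HsP. unfold Rdiv in HsQ |- *. nra. }
  assert (Hcubic : 18/25 * P^3 * (3/2) / (y * (Q + 9/16)) <= 18/25 * P^3 / sqrt (1 - P)).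
  { replace (18/25 * P^3 * (3/2) / (y * (Q + 9/16)))
      with (18/25 * P^3 / (y * (Q + 9/16) / (3/2))) by (field; lra).
    apply Rmult_le_compat_l; [apply Rmult_le_pos; [lra | apply pow_le; lra]|].
    apply Rinv_le_contravar; lra. }
  unfold majorant.
  enough (/ y <= 1 + 18/25 * P^3 * (3/2) / (y * (Q + 9/16)) + 21/50 * P) by lra.
  apply Rmult_le_reg_r with (y * (Q + 9/16)); [lra|].
  field_simplify; [| lra | lra].
  assert (Hm := Rmult_le_compat_l (1 - y) _ _ ltac:(lra) Hpoly).
  unfold P. nra.
Qed.

Lemma K_1 : K 1 = 1.
Proof. unfold K. replace ((1^2 - 1)/2) with 0 by field. rewrite exp_0. field. Qed.

Lemma K_decreasing a b : 0 < a -> a < b -> b <= 1 -> K b < K a.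
Proof.
  intros Ha Hab Hb. unfold K.
  assert (E : exp ((b^2 - 1)/2) = exp ((b^2 - a^2)/2) * exp ((a^2 - 1)/2)).
  { rewrite <- exp_plus. f_equal. field. }
  assert (H1 : exp ((b^2 - a^2)/2) < exp (b - a)) by (apply exp_increasing; nra).
  assert (H2 : a * exp (b - a) <= b).
  { pose proof (exp_ineq1_le (a - b)).
    assert (exp (a - b) * exp (b - a) = 1).
    { rewrite <- exp_plus. replace (a - b + (b - a)) with 0 by ring. apply exp_0. }
    pose proof (exp_pos (b - a)). nra. }
  pose proof (exp_pos ((a^2 - 1)/2)). pose proof (exp_pos ((b^2 - a^2)/2)).
  set (X := exp ((a^2 - 1)/2)) in *. set (Y := exp ((b^2 - a^2)/2)) in *.
  rewrite E.
  replace (Y * X / b) with (a * Y * (X / (a * b))) by (field; lra).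
  replace (X / a) with (b * (X / (a * b))) by (field; lra).
  apply Rmult_lt_compat_r; [apply Rdiv_lt_0_compat; nra | nra].
Qed.

Lemma K_continuous r : 0 < r -> continuous K r.
Proof.
  intros Hr. apply (ex_derive_continuous (K := R_AbsRing) (V := R_NormedModule)).
  unfold K. auto_derive. lra.
Qed.

Lemma K_surjective s : 1 < s -> exists r, 0 < r < 1 /\ K r = s.
Proof.
  intros Hs. set (r0 := / (2 * s)).
  assert (Hr0 : 0 < r0 < 1) by (apply Rinv_between_0_1; lra).
  assert (HK0 : s < K r0).
  { unfold K. pose proof (exp_ineq1_le (-(1/2))).
    assert (exp (-(1/2)) < exp ((r0^2 - 1)/2)) by (apply exp_increasing; nra).
    replace (exp ((r0^2 - 1)/2) / r0) with (2 * s * exp ((r0^2 - 1)/2)) by (unfold r0; field; lra).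
    nra. }
  destruct (Ranalysis5.IVT_interv (fun r => s - K r) r0 1) as [r [Hr HKr]].
  - intros a Ha. apply continuity_pt_filterlim.
    apply (continuous_minus (fun _ => s) K); [apply continuous_const | apply K_continuous; lra].
  - lra.
  - lra.
  - rewrite K_1; lra.
  - exists r. split; [|lra]. split; [lra|].
    destruct (proj2 Hr); [lra|]. subst r. rewrite K_1 in HKr. lra.
Qed.

Lemma Rminus_sol_K r : 0 < r <= 1 -> Rminus_sol (K r) = r.
Proof.
  intros Hr. unfold Rminus_sol.
  destruct (epsilon_spec (inhabits 0) (fun r' => 0 < r' <= 1 /\ K r' = K r)
              (ex_intro _ r (conj Hr eq_refl)))
    as [Hr' HK].
  set (r' := epsilon _ _) in *.
  destruct (Rtotal_order r' r) as [Hlt | [Heq | Hgt]]; [| exact Heq |].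
  - pose proof (K_decreasing r' r ltac:(lra) Hlt ltac:(lra)). lra.
  - pose proof (K_decreasing r r' ltac:(lra) Hgt ltac:(lra)). lra.
Qed.

Lemma Rminus_sol_spec s : 1 < s -> 0 < Rminus_sol s < 1 /\ K (Rminus_sol s) = s.
Proof.
  intros Hs. destruct (K_surjective s Hs) as [r [Hr <-]].
  rewrite Rminus_sol_K by lra. auto.
Qed.

Lemma Rminus_sol_continuous s : 1 < s -> continuous Rminus_sol s.
Proof.
  intros Hs. destruct (Rminus_sol_spec (s + 1) ltac:(lra)) as [Hr0 HK0].
  set (r0 := Rminus_sol (s + 1)) in *.
  assert (Hneg : continuity_pt (fun t => - Rminus_sol t) s).
  { apply (Ranalysis5.continuity_pt_recip_prelim (fun x => K (- x)) _ (-1) (- r0)).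
    - lra.
    - intros x y Hx Hxy Hy. apply K_decreasing; lra.
    - intros x Hx. unfold comp, id. rewrite Rminus_sol_K by lra. ring.
    - intros x Hx. apply continuity_pt_filterlim.
      apply (ex_derive_continuous (K := R_AbsRing) (V := R_NormedModule) (fun x => K (- x))).
      unfold K. auto_derive. lra.
    - replace (- -1) with 1 by ring. rewrite Ropp_involutive, K_1, HK0. lra. }
  apply continuity_pt_filterlim in Hneg.
  apply (continuous_ext (fun t => - - Rminus_sol t)); [intros; apply Ropp_involutive|].
  exact (continuous_opp (fun t => - Rminus_sol t) s Hneg).
Qed.

Lemma Rminus_sol_sqr_mul_exp s : 1 < s ->
  Rminus_sol s ^ 2 * exp (1 - Rminus_sol s ^ 2) = / s^2.
Proof.
  intros Hs. destruct (Rminus_sol_spec s Hs) as [Hr HK].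
  set (r := Rminus_sol s) in *. unfold K in HK.
  assert (E1 : exp ((r^2 - 1)/2) = s * r) by (rewrite <- HK; field; lra).
  assert (E2 : exp (1 - r^2) * exp ((r^2 - 1)/2) * exp ((r^2 - 1)/2) = 1).
  { rewrite <- !exp_plus. replace (1 - r^2 + (r^2 - 1)/2 + (r^2 - 1)/2) with 0 by field.
    apply exp_0. }
  rewrite E1 in E2.
  apply Rmult_eq_reg_r with (s^2); [| nra].
  rewrite Rinv_l by nra. rewrite <- E2 at 2. ring.
Qed.

Lemma dthetaMN_integrand_le_majorant c psi : 1 < c * sin psi ->
  dthetaMN_integrand c psi <= majorant (/ (c * sin psi)^2).
Proof.
  intros Hcs. unfold dthetaMN_integrand.
  destruct (Rminus_sol_spec _ Hcs) as [Hr _].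
  rewrite <- Rminus_sol_sqr_mul_exp by assumption.
  set (r := Rminus_sol (c * sin psi)) in *.
  replace (r^2 * exp (1 - r^2)) with ((1 - (1 - r^2)) * exp (1 - r^2)) by ring.
  apply inv_le_majorant. nra.
Qed.

Lemma dthetaMN_integrand_pos c psi : 1 < c * sin psi -> 0 < dthetaMN_integrand c psi.
Proof.
  intros Hcs. destruct (Rminus_sol_spec _ Hcs) as [Hr _].
  unfold dthetaMN_integrand. apply Rinv_0_lt_compat. nra.
Qed.

Lemma continuous_dthetaMN_integrand c psi : 1 < c * sin psi ->
  continuous (dthetaMN_integrand c) psi.
Proof.
  intros Hcs. destruct (Rminus_sol_spec _ Hcs) as [Hr _].
  unfold dthetaMN_integrand.
  apply (continuous_Rinv_comp (fun psi => 1 - Rminus_sol (c * sin psi) ^ 2)); [| nra].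
  apply (continuous_comp (fun psi => Rminus_sol (c * sin psi)) (fun r => 1 - r^2)).
  - apply (continuous_comp (fun psi => c * sin psi) Rminus_sol).
    + apply (ex_derive_continuous (K := R_AbsRing) (V := R_NormedModule)). auto_derive. auto.
    + apply Rminus_sol_continuous. assumption.
  - apply (ex_derive_continuous (K := R_AbsRing) (V := R_NormedModule)). auto_derive. auto.
Qed.

Definition quartic_sqrt_primitive (m t : R) : R :=
  (1 + m^2 + 3 * m^4 / 8) * asin (t / m)
  - t * sqrt (m^2 - t^2) * (1 + (2 * t^2 + 3 * m^2) / 8).

Lemma is_derive_quartic_sqrt_primitive m t : 0 < m -> t^2 < m^2 ->
  is_derive (quartic_sqrt_primitive m) t ((1 + t^2)^2 / sqrt (m^2 - t^2)).
Proof.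
  intros Hm Ht.
  assert (HS : 0 < sqrt (m^2 - t^2)) by (apply sqrt_lt_R0; lra).
  assert (HS2 : sqrt (m^2 - t^2)^2 = m^2 - t^2) by (apply pow2_sqrt; lra).
  set (S := sqrt (m^2 - t^2)) in *.
  assert (Htm : -1 < t / m < 1).
  { split; [apply Rmult_lt_reg_r with m | apply Rmult_lt_reg_r with m]; try field_simplify; nra. }
  assert (Hsq : sqrt (1 - (t / m)^2) = S / m).
  { replace (1 - (t / m)^2) with ((S / m)^2)
      by (unfold Rdiv; rewrite Rpow_mult_distr, HS2; field; lra).
    apply sqrt_pow2. apply Rlt_le, Rdiv_lt_0_compat; lra. }
  assert (Dasin : is_derive (fun t => asin (t / m)) t (/ m * / sqrt (1 - (t / m)^2))).
  { apply (is_derive_comp asin (fun t => t / m)); [apply is_derive_asin, Htm|].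
    auto_derive; [auto | field; lra]. }
  rewrite Hsq in Dasin.
  assert (Dprod : is_derive (fun t => t * sqrt (m^2 - t^2) * (1 + (2 * t^2 + 3 * m^2) / 8)) t
                  (S * (1 + (2 * t^2 + 3 * m^2) / 8) - t * t / S * (1 + (2 * t^2 + 3 * m^2) / 8)
                   + t * S * (t / 2))).
  { auto_derive; [lra|]. replace (m * (m * 1) + - (t * (t * 1))) with (m^2 - t^2) by ring.
    fold S. field. lra. }
  unfold quartic_sqrt_primitive.
  replace ((1 + t^2)^2 / S) with
    ((1 + m^2 + 3 * m^4 / 8) * (/ m * / (S / m))
     - (S * (1 + (2 * t^2 + 3 * m^2) / 8) - t * t / S * (1 + (2 * t^2 + 3 * m^2) / 8)
        + t * S * (t / 2))).
  - apply (is_derive_minus (fun t => _ * asin (t / m))); [apply is_derive_scal|]; assumption.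
  - apply Rmult_eq_reg_r with S; [|lra].
    field_simplify; [|lra|lra].
    replace (S^4) with ((S^2)^2) by ring. rewrite HS2.
    replace (m^4) with ((m^2)^2) by ring. field.
Qed.

Lemma quartic_sqrt_primitive_opp m t :
  quartic_sqrt_primitive m (- t) = - quartic_sqrt_primitive m t.
Proof.
  unfold quartic_sqrt_primitive.
  replace (- t / m) with (- (t / m)) by (unfold Rdiv; ring).
  rewrite asin_opp. replace ((- t)^2) with (t^2) by ring. ring.
Qed.

Lemma Rabs_quartic_sqrt_primitive_le m t : 0 < m -> t^2 < m^2 ->
  Rabs (quartic_sqrt_primitive m t) <= (1 + m^2 + 3 * m^4 / 8) * (PI / 2).
Proof.
  intros Hm. revert t.
  enough (Hpos : forall t, 0 <= t -> t^2 < m^2 ->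
    Rabs (quartic_sqrt_primitive m t) <= (1 + m^2 + 3 * m^4 / 8) * (PI / 2)).
  { intros t Ht. destruct (Rle_or_lt 0 t); [now apply Hpos|].
    rewrite <- (Ropp_involutive t), quartic_sqrt_primitive_opp, Rabs_Ropp.
    apply Hpos; [lra | replace ((- t)^2) with (t^2) by ring; lra]. }
  intros t Ht0 Ht. unfold quartic_sqrt_primitive.
  assert (Htm : 0 <= t / m <= 1).
  { split; [apply Rdiv_le_0_compat; lra|].
    apply Rmult_le_reg_r with m; [lra|]. field_simplify; nra. }
  pose proof (asin_nonneg _ Htm). pose proof (asin_bound (t / m)).
  assert (HS2 : sqrt (m^2 - t^2)^2 = m^2 - t^2) by (apply pow2_sqrt; lra).
  pose proof (sqrt_pos (m^2 - t^2)).
  set (S := sqrt (m^2 - t^2)) in *.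
  assert (HtS : t * S <= m^2 / 2) by (pose proof (pow2_ge_0 (t - S)); nra).
  assert (HW : 1 + (2 * t^2 + 3 * m^2) / 8 <= 1 + 5 * m^2 / 8) by lra.
  assert (0 <= t * S * (1 + (2 * t^2 + 3 * m^2) / 8) <= m^2 / 2 * (1 + 5 * m^2 / 8)).
  { split; [apply Rmult_le_pos; nra|]. apply Rmult_le_compat; nra. }
  pose proof PI2_1.
  assert (0 <= (1 + m^2 + 3 * m^4 / 8) * asin (t / m) <= (1 + m^2 + 3 * m^4 / 8) * (PI / 2)).
  { split; [apply Rmult_le_pos|apply Rmult_le_compat_l]; nra. }
  apply Rabs_le. nra.
Qed.

Definition cot (x : R) : R := cos x / sin x.

Definition cot_bound (c : R) : R := sqrt (c^2 - 1).

Lemma cot_bound_pos c : 1 < c -> 0 < cot_bound c.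
Proof. intros. unfold cot_bound. apply sqrt_lt_R0. nra. Qed.

Lemma cot_bound_sqr c : 1 < c -> cot_bound c ^ 2 = c^2 - 1.
Proof. intros. unfold cot_bound. apply pow2_sqrt. nra. Qed.

Lemma cot_bound_sqr_sub_cot_sqr c x : 1 < c -> sin x <> 0 ->
  cot_bound c ^ 2 - cot x ^ 2 = c^2 * (1 - / (c * sin x)^2).
Proof.
  intros Hc Hs. rewrite cot_bound_sqr by lra. unfold cot.
  pose proof (sin2_cos2 x) as H. unfold Rsqr in H.
  field_simplify; [| lra | lra].
  replace (cos x ^ 2) with (1 - sin x ^ 2) by (simpl; lra). f_equal. ring.
Qed.

Lemma cot_sqr_lt c x : 1 < c -> 1 < c * sin x -> cot x ^ 2 < cot_bound c ^ 2.
Proof.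
  intros Hc Hcs.
  assert (/ (c * sin x)^2 < 1) by (apply Rinv_between_0_1; nra).
  assert (0 < c^2 * (1 - / (c * sin x)^2)) by (apply Rmult_lt_0_compat; nra).
  rewrite <- cot_bound_sqr_sub_cot_sqr in * by nra. lra.
Qed.

(* Under [t = cot x], [/ (c * sin x)^2 = (1 + t^2)/c^2] and [dx = - dt/(1 + t^2)], so the
   cubic term of the majorant integrates against [quartic_sqrt_primitive (cot_bound c)]. *)
Definition majorant_primitive (c x : R) : R :=
  x - 18/25 / c^5 * quartic_sqrt_primitive (cot_bound c) (cot x) - 21/50 / c^2 * cot x.

Lemma is_derive_cot x : sin x <> 0 -> is_derive cot x (- (1 + cot x ^ 2)).
Proof. intros Hs. unfold cot. auto_derive; [assumption|]. field. assumption. Qed.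

Lemma is_derive_majorant_primitive c x : 1 < c -> 1 < c * sin x ->
  is_derive (majorant_primitive c) x (majorant (/ (c * sin x)^2)).
Proof.
  intros Hc Hcs.
  assert (Hs : 0 < sin x) by nra.
  pose proof (cot_sqr_lt c x Hc Hcs) as Hcot.
  pose proof (cot_bound_sqr_sub_cot_sqr c x Hc ltac:(lra)) as Hid.
  assert (HS : 0 < sqrt (cot_bound c ^ 2 - cot x ^ 2)) by (apply sqrt_lt_R0; lra).
  assert (Hsqrt : sqrt (1 - / (c * sin x)^2) = sqrt (cot_bound c ^ 2 - cot x ^ 2) / c).
  { assert (0 < 1 - / (c * sin x)^2).
    { apply (Rmult_lt_reg_l (c^2)); [nra|]. rewrite Rmult_0_r, <- Hid. lra. }
    rewrite Hid, sqrt_mult, sqrt_pow2 by (try apply pow_le; lra). field. lra. }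
  assert (Hcot1 : 1 + cot x ^ 2 = / sin x ^ 2).
  { unfold cot. pose proof (sin2_cos2 x) as H. unfold Rsqr in H.
    field_simplify; [|lra|lra]. f_equal. rewrite <- H. ring. }
  assert (DG := is_derive_comp (quartic_sqrt_primitive (cot_bound c)) cot x _ _
    (is_derive_quartic_sqrt_primitive _ _ (cot_bound_pos c Hc) Hcot) (is_derive_cot x ltac:(lra))).
  set (S := sqrt (cot_bound c ^ 2 - cot x ^ 2)) in *.
  assert (D : is_derive (majorant_primitive c) x
    (1 - 18/25 / c^5 * (- (1 + cot x ^ 2) * ((1 + cot x ^ 2)^2 / S))
       - 21/50 / c^2 * (- (1 + cot x ^ 2)))).
  { apply (is_derive_minus (fun x => x - _ * quartic_sqrt_primitive _ (cot x))
                           (fun x => _ * cot x)).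
    - apply (is_derive_minus (fun x => x) (fun x => _ * quartic_sqrt_primitive _ (cot x))).
      + apply (is_derive_id (K := R_AbsRing)).
      + apply is_derive_scal, DG.
    - apply is_derive_scal, is_derive_cot. lra. }
  unfold majorant. rewrite Hsqrt.
  replace (/ (c * sin x)^2) with ((1 + cot x ^ 2) / c^2) by (rewrite Hcot1; field; lra).
  replace (1 + 18/25 * ((1 + cot x ^ 2) / c^2)^3 / (S / c) + 21/50 * ((1 + cot x ^ 2) / c^2))
    with (1 - 18/25 / c^5 * (- (1 + cot x ^ 2) * ((1 + cot x ^ 2)^2 / S))
       - 21/50 / c^2 * (- (1 + cot x ^ 2))) by (field; lra).
  exact D.
Qed.

Lemma continuous_majorant_inv_sqr_sin c x : 1 < c * sin x ->
  continuous (fun x => majorant (/ (c * sin x)^2)) x.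
Proof.
  intros Hcs.
  assert (/ (c * sin x)^2 < 1) by (apply Rinv_between_0_1; nra).
  apply (ex_derive_continuous (K := R_AbsRing) (V := R_NormedModule)).
  assert (0 < sqrt (1 - / (c * sin x)^2)) by (apply sqrt_lt_R0; lra).
  unfold majorant. auto_derive.
  replace (c * sin x * (c * sin x * 1)) with ((c * sin x)^2) by ring.
  replace (1 + - / (c * sin x)^2) with (1 - / (c * sin x)^2) by ring.
  repeat split; nra.
Qed.

Definition primitive_deviation (c : R) : R :=
  18/25 / c^5 * ((1 + cot_bound c ^ 2 + 3 * cot_bound c ^ 4 / 8) * (PI / 2))
  + 21/50 / c^2 * cot_bound c.

Lemma Rabs_majorant_primitive_sub_le c x : 1 < c -> 1 < c * sin x ->
  Rabs (majorant_primitive c x - x) <= primitive_deviation c.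
Proof.
  intros Hc Hcs.
  pose proof (cot_sqr_lt c x Hc Hcs) as Hcot.
  pose proof (cot_bound_pos c Hc) as Hm.
  pose proof (Rabs_quartic_sqrt_primitive_le _ _ Hm Hcot) as HG.
  assert (Hcot_abs : Rabs (cot x) <= cot_bound c).
  { rewrite <- (Rabs_pos_eq (cot_bound c)) by lra. apply Rsqr_le_abs_0. unfold Rsqr. nra. }
  assert (HA : 0 < 18/25 / c^5) by (apply Rdiv_lt_0_compat; [lra | apply pow_lt; lra]).
  assert (HB : 0 < 21/50 / c^2) by (apply Rdiv_lt_0_compat; [lra | apply pow_lt; lra]).
  unfold majorant_primitive, primitive_deviation.
  replace (x - 18/25 / c^5 * quartic_sqrt_primitive (cot_bound c) (cot x) - 21/50 / c^2 * cot x - x)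
    with (- (18/25 / c^5 * quartic_sqrt_primitive (cot_bound c) (cot x) + 21/50 / c^2 * cot x))
    by ring.
  rewrite Rabs_Ropp. eapply Rle_trans; [apply Rabs_triang|].
  rewrite !Rabs_mult, !(Rabs_right (_ / c^_)) by lra.
  apply Rplus_le_compat; apply Rmult_le_compat_l; lra.
Qed.

(* [primitive_deviation (/ x) < asin x], divided by [x], with [w = x^2], [PI/2 <= 8/5] and
   [asin x >= x (1 + w/6 + 3 w^2/40)], reduces to [21/50 * sqrt (1 - w) < asin_bound_gap w]. *)
Definition asin_bound_gap (w : R) : R :=
  1 + w/6 + 3 * w^2/40 - 18/25 * (8/5) * (w + 3 * (1 - w)^2/8).

Lemma asin_bound_gap_pos w : 0 <= w <= 1 -> 0 < asin_bound_gap w.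
Proof. intros. unfold asin_bound_gap. nra. Qed.

Lemma asin_bound_gap_le a b : 0 <= a <= b -> b <= 1 -> asin_bound_gap b <= asin_bound_gap a.
Proof. intros. unfold asin_bound_gap. nra. Qed.

Definition asin_bound_gap_on (a b : R) : Prop :=
  0 <= a /\ a <= b /\ b <= 1 /\ (21/50)^2 * (1 - a) < asin_bound_gap b ^ 2.

Lemma asin_bound_gap_on_interval a b w :
  asin_bound_gap_on a b -> a <= w <= b -> (21/50)^2 * (1 - w) < asin_bound_gap w ^ 2.
Proof.
  intros (Ha & _ & Hb & H) Hw.
  pose proof (asin_bound_gap_pos b ltac:(lra)).
  assert (asin_bound_gap b ^ 2 <= asin_bound_gap w ^ 2)
    by (apply pow_incr; split; [lra | apply asin_bound_gap_le; lra]).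
  nra.
Qed.

Lemma asin_bound_gap_sqr_gt w : 0 <= w <= 1 -> (21/50)^2 * (1 - w) < asin_bound_gap w ^ 2.
Proof.
  intros Hw.
  apply (locally_sorted_cover _ _ asin_bound_gap_on_interval 0 (1/4)
    [1/2; 5/8; 3/4; 13/16; 7/8; 29/32; 15/16; 31/32; 1]); [|simpl; lra].
  unfold asin_bound_gap_on, asin_bound_gap.
  repeat (apply LSorted_consn; [| repeat split; lra]); apply LSorted_cons1.
Qed.

Lemma primitive_deviation_lt_asin c : 1 < c -> primitive_deviation c < asin (/ c).
Proof.
  intros Hc. pose proof (Rinv_between_0_1 c Hc) as Hx.
  set (x := / c) in *.
  assert (Hcx : c = / x) by (unfold x; rewrite Rinv_inv; reflexivity).
  set (w := x^2).
  assert (Hw : 0 < w < 1) by (unfold w; nra).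
  assert (Hs2 : sqrt (1 - w) ^ 2 = 1 - w) by (apply pow2_sqrt; lra).
  pose proof (sqrt_pos (1 - w)).
  set (s := sqrt (1 - w)) in *.
  assert (Hm : cot_bound c = s / x).
  { unfold cot_bound. rewrite <- (sqrt_pow2 (s / x)) by (apply Rdiv_le_0_compat; lra).
    f_equal. rewrite Hcx. unfold Rdiv. rewrite Rpow_mult_distr, Hs2. unfold w. field. lra. }
  assert (HA : 18/25 / c^5 * (1 + cot_bound c ^ 2 + 3 * cot_bound c ^ 4 / 8)
               = 18/25 * x * (w + 3 * (1 - w)^2/8)).
  { replace (cot_bound c ^ 4) with ((cot_bound c ^ 2)^2) by ring.
    rewrite cot_bound_sqr by lra. rewrite Hcx. unfold w. field. lra. }
  assert (HB : 21/50 / c^2 * cot_bound c = 21/50 * x * s) by (rewrite Hm, Hcx; field; lra).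
  unfold primitive_deviation. rewrite <- Rmult_assoc, HA, HB.
  pose proof (asin_ge_taylor5 x ltac:(lra)) as Hasin.
  replace (x + x^3/6 + 3 * x^5/40) with (x * (1 + w/6 + 3 * w^2/40)) in Hasin by (unfold w; field).
  pose proof (asin_bound_gap_pos w ltac:(lra)) as Hgap0.
  pose proof (asin_bound_gap_sqr_gt w ltac:(lra)) as Hgap.
  assert (Hsgap : 21/50 * s < asin_bound_gap w).
  { apply Rnot_le_lt. intros Hle.
    assert (asin_bound_gap w ^ 2 <= (21/50 * s)^2) by (apply pow_incr; lra).
    replace ((21/50 * s)^2) with ((21/50)^2 * (1 - w)) in * by (rewrite <- Hs2; ring). lra. }
  assert (Hpi : 18/25 * x * (w + 3 * (1 - w)^2/8) * (PI/2)
                <= 18/25 * x * (w + 3 * (1 - w)^2/8) * (8/5)).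
  { apply Rmult_le_compat_l; [nra|]. pose proof PI_le_16_5. lra. }
  unfold asin_bound_gap in Hsgap. fold x. nra.
Qed.

Lemma one_lt_mul_sin c psi : 1 < c -> asin (/ c) < psi < PI - asin (/ c) -> 1 < c * sin psi.
Proof.
  intros Hc Hpsi. pose proof (Rinv_between_0_1 c Hc) as Hx.
  pose proof (asin_nonneg (/ c) ltac:(lra)). pose proof (asin_bound_lt (/ c) ltac:(lra)).
  pose proof (sin_asin (/ c) ltac:(lra)) as Hs.
  assert (/ c < sin psi).
  { rewrite <- Hs. destruct (Rle_or_lt psi (PI/2)).
    - apply sin_increasing_1; lra.
    - rewrite <- (sin_PI_x psi). apply sin_increasing_1; lra. }
  replace 1 with (c * / c) by (field; lra). apply Rmult_lt_compat_l; lra.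
Qed.

Section Integral_bounds.

Variables (c a b : R).
Hypothesis (Hc : 1 < c) (Hab : a <= b).
Hypothesis (Hdom : forall psi, a <= psi <= b -> 1 < c * sin psi).

Lemma ex_RInt_dthetaMN_integrand : ex_RInt (dthetaMN_integrand c) a b.
Proof.
  apply (ex_RInt_continuous (V := R_CompleteNormedModule)). intros psi Hpsi.
  rewrite Rmin_left, Rmax_right in Hpsi by lra.
  apply continuous_dthetaMN_integrand, Hdom, Hpsi.
Qed.

Lemma RInt_dthetaMN_integrand_le :
  RInt (dthetaMN_integrand c) a b <= b - a + 2 * primitive_deviation c.
Proof.
  assert (HI : is_RInt (fun x => majorant (/ (c * sin x)^2)) a b
                 (minus (majorant_primitive c b) (majorant_primitive c a))).
  { apply (is_RInt_derive (majorant_primitive c)); intros psi Hpsi;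
      rewrite Rmin_left, Rmax_right in Hpsi by lra.
    - apply is_derive_majorant_primitive; auto.
    - apply continuous_majorant_inv_sqr_sin; auto. }
  apply Rle_trans with (minus (majorant_primitive c b) (majorant_primitive c a)).
  - apply (is_RInt_le (dthetaMN_integrand c) (fun x => majorant (/ (c * sin x)^2)) a b _ _ Hab);
      [| exact HI |].
    + apply (RInt_correct (V := R_CompleteNormedModule)), ex_RInt_dthetaMN_integrand.
    + intros psi Hpsi. apply dthetaMN_integrand_le_majorant, Hdom. lra.
  - pose proof (Rabs_majorant_primitive_sub_le c a Hc (Hdom a ltac:(lra))) as Ha.
    pose proof (Rabs_majorant_primitive_sub_le c b Hc (Hdom b ltac:(lra))) as Hb.
    apply Rabs_le_between in Ha, Hb. unfold minus, plus, opp; simpl. lra.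
Qed.

End Integral_bounds.

Theorem mainTheorem10 (c : R) (hc : 1 < c) :
  exists v : R,
    is_RInt_gen (dthetaMN_integrand c)
      (at_right (asin (/ c))) (at_left (PI - asin (/ c))) v
    /\ v < PI.
Proof.
  set (al := asin (/ c)).
  assert (Hdom : forall psi, al < psi < PI - al -> 1 < c * sin psi)
    by (intros psi; apply one_lt_mul_sin, hc).
  pose proof (primitive_deviation_lt_asin c hc) as Hdev. fold al in Hdev.
  assert (Hal : al < PI / 2) by (apply asin_bound_lt; pose proof (Rinv_between_0_1 c hc); lra).
  destruct (is_RInt_gen_nonneg_bounded (dthetaMN_integrand c) al (PI - al)
              (PI - 2 * al + 2 * primitive_deviation c)) as [v [Hv Hle]].
  - lra.
  - intros a b Ha Hab Hb. apply ex_RInt_dthetaMN_integrand; [lra | intros; apply Hdom; lra].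
  - intros psi Hpsi. apply Rlt_le, dthetaMN_integrand_pos, Hdom, Hpsi.
  - intros a b Ha Hab Hb.
    apply Rle_trans with (b - a + 2 * primitive_deviation c); [| lra].
    apply RInt_dthetaMN_integrand_le; [assumption | lra | intros; apply Hdom; lra].
  - exists v. split; [exact Hv | lra].
Qed.
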